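(* Let $A$ be a complex $r$-matrix of order $n_1\times\cdots\times n_r$ and write $N=n_1\cdots n_r$. Then: (a) $\|A\|_1=|A|_{\max}$; (b) if $p\geq q\geq 1$, then $\|A\|_p\geq\|A\|_q$; (c) if $p\geq q\geq 1$, then $N^{1/p}\|A\|_p\leq N^{1/q}\|A\|_q$; (d) $\|A\|_p\leq|A|_1$ for every $p\geq1$; (e) if $p\geq q\geq 1$, then $0\leq\|A\|_p-\|A\|_q\leq (p-q)\,|A|_1\,N\log N$.
   Context: An $r$-matrix $A$ of order $n_1\times\cdots\times n_r$ is a function on $[n_1]\times\cdots\times[n_r]$ with values $a_{i_1,\ldots,i_r}$. $|A|_{\max}=\max|a_{i_1,\ldots,i_r}|$ and $|A|_1=\sum|a_{i_1,\ldots,i_r}|$. The linear form is $L_A(\mathbf{x}^{(1)},\ldots,\mathbf{x}^{(r)})=\sum a_{i_1,\ldots,i_r}\overline{x^{(1)}_{i_1}}\cdots\overline{x^{(r)}_{i_r}}$ for $\mathbf{x}^{(k)}\in\mathbb{C}^{n_k}$, and for real $p\geq1$ the spectral $p$-norm is $\|A\|_p=\max\{|L_A(\mathbf{x}^{(1)},\ldots,\mathbf{x}^{(r)})|:|\mathbf{x}^{(1)}|_p=\cdots=|\mathbf{x}^{(r)}|_p=1\}$, where $|\cdot|_p$ is the $\ell^p$ norm. *)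

From HB Require Import structures.
From mathcomp Require Import all_boot all_order all_algebra.
From mathcomp Require Import complex.
From mathcomp Require Import all_classical all_reals all_analysis.
Set Implicit Arguments. Unset Strict Implicit. Unset Printing Implicit Defensive.
Import Order.TTheory GRing.Theory Num.Theory.
Local Open Scope ring_scope.
Local Open Scope classical_set_scope.

Section RMatrix.
Variable R : realType.

Definition cabs (z : R[i]) : R := Normc.normc z.

(* index set [n_1] x ... x [n_r] (0-based) *)
Definition ridx (r : nat) (n : 'I_r -> nat) := {dffun forall k : 'I_r, 'I_(n k)}.

Definition rmatrix (r : nat) (n : 'I_r -> nat) := ridx n -> R[i].

Definition rsize (r : nat) (n : 'I_r -> nat) : nat := (\prod_(k < r) n k)%N.

Definition maxabs r (n : 'I_r -> nat) (A : rmatrix n) : R :=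
  \big[Num.max/0]_(i : ridx n) cabs (A i).

Definition sumabs r (n : 'I_r -> nat) (A : rmatrix n) : R :=
  \sum_(i : ridx n) cabs (A i).

Definition lpnorm (p : R) (m : nat) (x : 'I_m -> R[i]) : R :=
  (\sum_(j < m) cabs (x j) `^ p) `^ p^-1.

Definition linform r (n : 'I_r -> nat) (A : rmatrix n)
    (x : forall k : 'I_r, 'I_(n k) -> R[i]) : R[i] :=
  \sum_(i : ridx n) A i * \prod_(k < r) conjc (x k (i k)).

(* spectral p-norm: the max (= sup, the max being attained by compactness)
   of |L_A(x)| over tuples of l^p-unit vectors *)
Definition specnorm (p : R) r (n : 'I_r -> nat) (A : rmatrix n) : R :=
  sup [set cabs (linform A x) |
       x in [set x : forall k : 'I_r, 'I_(n k) -> R[i] |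
             forall k, lpnorm p (x k) = 1]].

End RMatrix.

From HB Require Import structures.
From mathcomp Require Import all_boot all_order all_algebra.
From mathcomp Require Import complex.
From mathcomp Require Import all_classical all_reals all_analysis.
From mathcomp Require Import ring lra.
Import Order.TTheory GRing.Theory Num.Theory.
Local Open Scope ring_scope.
Set Implicit Arguments. Unset Strict Implicit. Unset Printing Implicit Defensive.

(* |A|_max <= ||A||_1 comes from testing L_A on tuples of standard basis
   vectors, which are unit vectors for every p.  The upper bounds come from
   normalising an arbitrary tuple x: by multilinearity
   |L_A(x)| <= (prod_k |x_k|_p) ||A||_p.  Feeding in the comparisons
   |y|_p <= |y|_q <= m^(1/q - 1/p) |y|_p between l^p norms on C^m (the second
   one is Jensen's inequality for u |-> u^(p/q)) gives (b) and (c), while (c)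
   with N^t - 1 <= t N ln N and ||A||_q <= |A|_1 gives (e).  For p = 1,
   distributing the product of the sums |x_k|_1 = 1 over the index set
   gives (a). *)

Section PowerSums.
Variable R : realType.

Lemma ler_powR2r (p : R) :
  0 < p -> {in Num.nneg &, {mono (@powR R)^~ p : x y / x <= y}}.
Proof.
move=> p_gt0 x y x_ge0 y_ge0; apply/idP/idP => [le_pow|le_xy]; last first.
  exact: (ge0_ler_powR (ltW p_gt0) x_ge0 y_ge0 le_xy).
have powRK z : z \is Num.nneg -> (z `^ p) `^ p^-1 = z.
  by move=> z_ge0; rewrite -powRrM mulfV ?gt_eqF ?powRr1.
have powR_nneg z : z `^ p \is Num.nneg by rewrite nnegrE powR_ge0.
have pV_ge0 : 0 <= p^-1 by rewrite invr_ge0 ltW.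
by have := ge0_ler_powR pV_ge0 (powR_nneg x) (powR_nneg y) le_pow; rewrite !powRK.
Qed.

Lemma jensen_powR (s : R) m (b : 'I_m.+1 -> R) : 1 <= s -> (forall j, 0 <= b j) ->
  ((\sum_j b j) / m.+1%:R) `^ s <= (\sum_j b j `^ s) / m.+1%:R.
Proof.
move=> s_ge1; elim: m b => [|m IHm] b b_ge0; first by rewrite !big_ord1 !divr1.
pose t : R := m.+1%:R / m.+2%:R.
have t01 : 0 <= t <= 1 by rewrite /t divr_ge0 //= ler_pdivrMr ?ltr0n // mul1r ler_nat.
have avgE (S y : R) : (S + y) / m.+2%:R = t * (S / m.+1%:R) + (1 - t) * y.
  rewrite /t -[m.+2]addn1 natrD; field.
  by have := ler0n R m => m_ge0; apply/andP; split; apply: lt0r_neq0; lra.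
have conv_powR (x y : R) : 0 <= x -> 0 <= y ->
    (t * x + (1 - t) * y) `^ s <= t * x `^ s + (1 - t) * y `^ s.
  case/andP: t01 => t_ge0 t_le1 x_ge0 y_ge0.
  have := convex_powR s_ge1 (Itv01 t_ge0 t_le1) (x := x) (y := y).
  by rewrite !inE /= !in_itv /= !andbT !convRE; apply.
rewrite !(big_ord_recr m.+1) /= !avgE.
apply: le_trans (conv_powR _ _ _ (b_ge0 _)) _.
  by apply: divr_ge0 => //; apply: sumr_ge0 => i _; exact: b_ge0.
rewrite lerD2r ler_wpM2l //; first by case/andP: t01.
exact: IHm.
Qed.

Lemma powR_sum_le (s : R) m (b : 'I_m -> R) : 1 <= s -> (forall j, 0 <= b j) ->
  (\sum_j b j) `^ s <= m%:R `^ (s - 1) * \sum_j b j `^ s.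
Proof.
case: m b => [|m] b s_ge1 b_ge0.
  by rewrite !big_ord0 mulr0 powR0 // gt_eqF // (lt_le_trans ltr01).
set M : R := m.+1%:R; have M_gt0 : 0 < M by rewrite ltr0n.
have powRS : M `^ s = M `^ (s - 1) * M.
  by rewrite powRB ?(gt_eqF M_gt0) ?implybT // powRr1 ?ltW // divfK ?gt_eqF ?powR_gt0.
have sum_ge0 : 0 <= \sum_j b j by apply: sumr_ge0.
rewrite -[\sum_j b j](divfK (lt0r_neq0 M_gt0)) powRM ?divr_ge0 ?(ltW M_gt0) //.
rewrite powRS mulrCA ler_wpM2l ?powR_ge0 // -ler_pdivlMr //.
exact: jensen_powR.
Qed.

Definition lpnormr (p : R) m (a : 'I_m -> R) : R := (\sum_j a j `^ p) `^ p^-1.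

Lemma lpnormr_ge0 (p : R) m (a : 'I_m -> R) : 0 <= lpnormr p a.
Proof. exact: powR_ge0. Qed.

Lemma lpnormr_powR (p : R) m (a : 'I_m -> R) : 0 < p ->
  lpnormr p a `^ p = \sum_j a j `^ p.
Proof.
move=> p_gt0; rewrite -powRrM mulVf ?gt_eqF // powRr1 //.
by rewrite sumr_ge0 // => j _; rewrite powR_ge0.
Qed.

Lemma lpnormr_le (p c : R) m (a : 'I_m -> R) : 0 < p -> 0 <= c ->
  \sum_j a j `^ p <= c `^ p -> lpnormr p a <= c.
Proof.
by move=> p_gt0 c_ge0; rewrite -lpnormr_powR // ler_powR2r // nnegrE ?lpnormr_ge0.
Qed.

Lemma coord_le_lpnormr (p : R) m (a : 'I_m -> R) j : 0 < p -> 0 <= a j ->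
  a j <= lpnormr p a.
Proof.
move=> p_gt0 aj_ge0; rewrite -(ler_powR2r p_gt0) ?nnegrE ?lpnormr_ge0 //.
rewrite lpnormr_powR // (bigD1 j) //= lerDl.
by rewrite sumr_ge0 // => i _; rewrite powR_ge0.
Qed.

Lemma lpnormrZ (p c : R) m (a : 'I_m -> R) : 0 < p -> 0 <= c ->
  (forall j, 0 <= a j) -> lpnormr p (fun j => c * a j) = c * lpnormr p a.
Proof.
move=> p_gt0 c_ge0 a_ge0; rewrite /lpnormr.
under eq_bigr do rewrite powRM //.
rewrite -mulr_sumr powRM ?powR_ge0 ?sumr_ge0 // => [|j _]; last exact: powR_ge0.
by rewrite -powRrM mulfV ?gt_eqF // powRr1.
Qed.

Lemma lpnormr_antitone (p q : R) m (a : 'I_m -> R) : 0 < q -> q <= p ->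
  (forall j, 0 <= a j) -> lpnormr p a <= lpnormr q a.
Proof.
move=> q_gt0 le_qp a_ge0; have p_gt0 := lt_le_trans q_gt0 le_qp.
set c := lpnormr q a; have c_ge0 : 0 <= c := lpnormr_ge0 _ _.
apply: lpnormr_le => //.
have powR_split x : x `^ p = x `^ (p - q) * x `^ q.
  by rewrite -powRD ?subrK ?(gt_eqF p_gt0).
rewrite powR_split lpnormr_powR // mulr_sumr ler_sum // => j _.
rewrite powR_split ler_wpM2r ?powR_ge0 //.
by rewrite ge0_ler_powR ?subr_ge0 ?nnegrE ?coord_le_lpnormr.
Qed.

Lemma lpnormr_le_card (p q : R) m (a : 'I_m -> R) : 0 < q -> q <= p ->
  (forall j, 0 <= a j) -> lpnormr q a <= m%:R `^ (q^-1 - p^-1) * lpnormr p a.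
Proof.
move=> q_gt0 le_qp a_ge0; have p_gt0 := lt_le_trans q_gt0 le_qp.
pose s := p / q; have s_ge1 : 1 <= s by rewrite ler_pdivlMr ?mul1r.
have aqs j : (a j `^ q) `^ s = a j `^ p by rewrite -powRrM mulrC divfK ?gt_eqF.
have := powR_sum_le s_ge1 (fun j => powR_ge0 (a j) q).
rewrite (eq_bigr _ (fun j _ => aqs j)) => /(@ge0_ler_powR _ p^-1).
rewrite -powRrM powRM ?powR_ge0 ?sumr_ge0 -?powRrM //; last first.
  by move=> j _; rewrite powR_ge0.
have -> : s * p^-1 = q^-1 by rewrite mulrAC mulfV ?gt_eqF ?mul1r.
have -> : (s - 1) * p^-1 = q^-1 - p^-1 by rewrite /s; field; rewrite !gt_eqF.
apply; rewrite ?invr_ge0 ?ltW // nnegrE ?powR_ge0 //.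
by rewrite mulr_ge0 ?powR_ge0 ?sumr_ge0 // => j _; rewrite powR_ge0.
Qed.

Lemma lpnormr1 m (a : 'I_m -> R) : (forall j, 0 <= a j) ->
  lpnormr 1 a = \sum_j a j.
Proof.
move=> a_ge0; rewrite /lpnormr invr1 powRr1; last first.
  by apply: sumr_ge0 => j _; rewrite powR_ge0.
by apply: eq_bigr => j _; rewrite powRr1.
Qed.

Lemma powR_prod (I : finType) (F : I -> R) (t : R) : (forall i, 0 <= F i) ->
  (\prod_i F i) `^ t = \prod_i F i `^ t.
Proof.
move=> F_ge0; elim: (index_enum I) => [|i s IHs]; first by rewrite !big_nil powR1.
by rewrite !big_cons powRM ?IHs ?prodr_ge0.
Qed.

Lemma expR_sub1_le (u : R) : expR u - 1 <= u * expR u.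
Proof.
have := expR_ge1Dx (- u); rewrite expRN -(ler_pM2r (expR_gt0 u)).
rewrite mulVf ?gt_eqF ?expR_gt0 //.
by rewrite mulrDl mul1r mulNr; lra.
Qed.

Lemma powR_sub1_le (x t : R) : 1 <= x -> 0 <= t <= 1 -> x `^ t - 1 <= t * x * ln x.
Proof.
move=> x_ge1 /andP[t_ge0 t_le1]; have x_gt0 : 0 < x := lt_le_trans ltr01 x_ge1.
have xtE : x `^ t = expR (t * ln x) by rewrite /powR gt_eqF.
rewrite xtE; apply: le_trans (expR_sub1_le _) _; rewrite -xtE mulrAC.
by rewrite ler_wpM2r ?ln_ge0 // ler_wpM2l // ler1_powR.
Qed.

End PowerSums.

Lemma big_prod_dffun (S : comPzSemiRingType) (I : finType) (T_ : I -> finType)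
    (G : forall i, T_ i -> S) :
  \sum_(t : {dffun forall i, T_ i}) \prod_i G i (t i) =
  \prod_i \sum_(j : T_ i) G i j.
Proof.
rewrite (reindex (@dffun_of_fprod I T_)); last exact/onW_bij/dffun_of_fprod_bij.
transitivity (\sum_(t : fprod T_) \prod_(i in I) [ffun j => G i j] (t i)).
  by apply: eq_bigr => t _; apply: eq_bigr => i _; rewrite !ffunE.
rewrite big_fprod -(bigA_distr_big_dep _ (fun i => untag 0 [ffun j => G i j])).
apply: eq_bigr => i _.
rewrite [RHS](eq_bigr [ffun j => G i j]) => [|j _]; last by rewrite ffunE.
by rewrite (big_tag (fun k => [ffun j => G k j] : T_ k -> S)).
Qed.

Section ComplexModulus.
Variable R : realType.
Implicit Types z : R[i].

Lemma cabs0 : cabs (0 : R[i]) = 0.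
Proof. exact: Normc.normc0. Qed.

Lemma cabs1 : cabs (1 : R[i]) = 1.
Proof. exact: Normc.normc1. Qed.

(* [cabs] is the norm of the normed zmodule [Rcomplex R], so its generic
   lemmas apply. *)
Lemma cabs_ge0 z : 0 <= cabs z.
Proof. exact: (@normr_ge0 _ (Rcomplex R)). Qed.

Lemma cabs_sum (I : finType) (F : I -> R[i]) :
  cabs (\sum_i F i) <= \sum_i cabs (F i).
Proof. exact: (@ler_norm_sum _ (Rcomplex R)). Qed.

Lemma cabsM z1 z2 : cabs (z1 * z2) = cabs z1 * cabs z2.
Proof. exact: Normc.normcM. Qed.

Lemma cabs_prod (I : finType) (F : I -> R[i]) :
  cabs (\prod_i F i) = \prod_i cabs (F i).
Proof. exact: (big_morph _ cabsM cabs1). Qed.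

Lemma cabsJ z : cabs z^*%C = cabs z.
Proof. by case: z => a b; rewrite /cabs /Normc.normc /= sqrrN. Qed.

Lemma cabs_real (c : R) : 0 <= c -> cabs c%:C%C = c.
Proof.
by move=> c_ge0; rewrite /cabs /Normc.normc /= expr0n addr0 sqrtr_sqr ger0_norm.
Qed.

Lemma lpnormZ (p c : R) m (x : 'I_m -> R[i]) : 0 < p -> 0 <= c ->
  lpnorm p (fun j => x j * c%:C%C) = c * lpnorm p x.
Proof.
move=> p_gt0 c_ge0; rewrite /lpnorm.
under eq_bigr do rewrite cabsM cabs_real // mulrC.
by apply: (lpnormrZ (a := fun j => cabs (x j))) => // j; apply: cabs_ge0.
Qed.

Lemma lpnorm_antitone (p q : R) m (x : 'I_m -> R[i]) : 0 < q -> q <= p ->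
  lpnorm p x <= lpnorm q x.
Proof. by move=> q_gt0 le_qp; apply: lpnormr_antitone => // j; apply: cabs_ge0. Qed.

Lemma lpnorm_le_card (p q : R) m (x : 'I_m -> R[i]) : 0 < q -> q <= p ->
  lpnorm q x <= m%:R `^ (q^-1 - p^-1) * lpnorm p x.
Proof. by move=> q_gt0 le_qp; apply: lpnormr_le_card => // j; apply: cabs_ge0. Qed.

End ComplexModulus.

Section SpectralNorm.
Variables (R : realType) (r : nat) (n : 'I_r -> nat).
Hypothesis n_gt0 : forall k, (0 < n k)%N.
Variable A : rmatrix R n.
Local Notation vectors := (forall k : 'I_r, 'I_(n k) -> R[i]).

Lemma linform_le (x : vectors) :
  cabs (linform A x) <= \sum_i cabs (A i) * \prod_k cabs (x k (i k)).
Proof.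
apply: le_trans (cabs_sum _) _; apply: ler_sum => i _.
by rewrite cabsM cabs_prod; under eq_bigr do rewrite cabsJ.
Qed.

Lemma linform_le_sumabs (p : R) (x : vectors) : 0 < p ->
  (forall k, lpnorm p (x k) = 1) -> cabs (linform A x) <= sumabs A.
Proof.
move=> p_gt0 x_unit; apply: le_trans (linform_le x) _; apply: ler_sum => i _.
rewrite ler_piMr ?cabs_ge0 // prodr_ile1 // => k _.
by rewrite cabs_ge0 -(x_unit k) coord_le_lpnormr ?cabs_ge0.
Qed.

Definition basis_vectors (i : ridx n) : vectors :=
  fun k j => if j == i k then 1 else 0.
Arguments basis_vectors : clear implicits.

Lemma lpnorm_basis_vectors (p : R) (i : ridx n) (k : 'I_r) :
  0 < p -> lpnorm p (basis_vectors i k) = 1.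
Proof.
move=> p_gt0; rewrite /lpnorm (bigD1 (i k)) //= big1 => [|j /negbTE ji].
  by rewrite /basis_vectors eqxx cabs1 addr0 !powR1.
by rewrite /basis_vectors ji cabs0 powR0 ?gt_eqF.
Qed.

Lemma linform_basis_vectors i : linform A (basis_vectors i) = A i.
Proof.
rewrite /linform (bigD1 i) //= [X in _ + X]big1 => [|i' i'i].
  by rewrite addr0 big1 ?mulr1 // => k _; rewrite /basis_vectors eqxx conjc1.
have [k /negbTE i'ki] : exists k, i' k != i k.
  apply/existsP; rewrite -negb_forall; apply: contra i'i => /forallP eqi.
  by apply/eqP/ffunP => k; apply/eqP/eqi.
by rewrite (bigD1 k) //= /basis_vectors i'ki conjc0 mul0r mulr0.
Qed.

Let i0 : ridx n := [ffun k => Ordinal (n_gt0 k)].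

Lemma specnorm_has_sup (p : R) : 0 < p ->
  has_sup [set cabs (linform A x) |
           x in [set x : vectors | forall k, lpnorm p (x k) = 1]].
Proof.
move=> p_gt0; split.
  exists (cabs (linform A (basis_vectors i0))), (basis_vectors i0) => // k.
  exact: lpnorm_basis_vectors.
by exists (sumabs A) => _ [x x_unit <-]; exact: linform_le_sumabs x_unit.
Qed.

Lemma linform_le_specnorm (p : R) (x : vectors) : 0 < p ->
  (forall k, lpnorm p (x k) = 1) -> cabs (linform A x) <= specnorm p A.
Proof.
move=> p_gt0 x_unit; apply: sup_upper_bound (specnorm_has_sup p_gt0) _ _.
by exists x.
Qed.

Lemma specnorm_ge0 (p : R) : 0 < p -> 0 <= specnorm p A.
Proof.
move=> p_gt0; apply: le_trans (cabs_ge0 (linform A (basis_vectors i0))) _.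
by apply: linform_le_specnorm => // k; exact: lpnorm_basis_vectors.
Qed.

Lemma specnorm_le (p c : R) : 0 < p ->
  (forall x : vectors,
     (forall k, lpnorm p (x k) = 1) -> cabs (linform A x) <= c) ->
  specnorm p A <= c.
Proof.
move=> p_gt0 ub; apply: ge_sup; first by case: (specnorm_has_sup p_gt0).
by move=> _ [x x_unit <-]; exact: ub.
Qed.

Lemma linformZ (x : vectors) (d : 'I_r -> R) :
  linform A (fun k j => x k j * (d k)%:C%C) = linform A x * (\prod_k d k)%:C%C.
Proof.
rewrite /linform mulr_suml; apply: eq_bigr => i _; rewrite -mulrA; congr (_ * _).
rewrite rmorph_prod -big_split; apply: eq_bigr => k _.
by rewrite rmorphM; congr (_ * _); exact: conjc_real.
Qed.

Lemma linform_le_prod_lpnorm (p : R) (x : vectors) : 0 < p ->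
  (forall k, 0 < lpnorm p (x k)) ->
  cabs (linform A x) <= (\prod_k lpnorm p (x k)) * specnorm p A.
Proof.
move=> p_gt0 x_gt0; set nu := fun k => lpnorm p (x k).
have nu_gt0 : 0 < \prod_k nu k by apply: prodr_gt0 => k _; exact: x_gt0.
have nuV_ge0 k : 0 <= (nu k)^-1 by rewrite invr_ge0; exact/ltW/x_gt0.
have := linform_le_specnorm (x := fun k j => x k j * ((nu k)^-1)%:C%C) p_gt0.
rewrite linformZ cabsM cabs_real ?prodr_ge0 //.
rewrite prodfV -ler_pdivlMr ?invr_gt0 // invrK mulrC; apply => k.
by rewrite lpnormZ ?nuV_ge0 // mulVf ?gt_eqF ?x_gt0.
Qed.

Lemma specnorm1 : specnorm 1 A = maxabs A.
Proof.
apply/le_anti/andP; split.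
- apply: specnorm_le => [|x x_unit]; first exact: ltr01.
  apply: le_trans (linform_le x) _.
  have x_l1 k : \sum_j cabs (x k j) = 1.
    by rewrite -(lpnormr1 (fun j => cabs_ge0 (x k j))); exact: x_unit.
  apply: (@le_trans _ _ (\sum_(i : ridx n) maxabs A * \prod_k cabs (x k (i k)))).
    apply: ler_sum => i _; apply: ler_wpM2r; last exact: le_bigmax.
    by apply: prodr_ge0 => k _; exact: cabs_ge0.
  rewrite -mulr_sumr (big_prod_dffun (fun k j => cabs (x k j))).
  by rewrite big1 ?mulr1 // => k _; exact: x_l1.
- apply: bigmax_le; first exact: specnorm_ge0.
  move=> i _; rewrite -linform_basis_vectors linform_le_specnorm // => k.
  exact: lpnorm_basis_vectors.
Qed.

Lemma specnorm_le_sumabs (p : R) : 0 < p -> specnorm p A <= sumabs A.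
Proof. by move=> p_gt0; apply: specnorm_le => // x; apply: linform_le_sumabs. Qed.

Lemma specnorm_mono (p q : R) : 0 < q -> q <= p -> specnorm q A <= specnorm p A.
Proof.
move=> q_gt0 le_qp; have p_gt0 := lt_le_trans q_gt0 le_qp.
apply: specnorm_le => // x x_unit.
have xp_gt0 k : 0 < lpnorm p (x k).
  rewrite lt0r lpnormr_ge0 andbT.
  apply: contraTneq (lpnorm_le_card (x k) q_gt0 le_qp) => ->.
  by rewrite x_unit mulr0 ler10.
apply: le_trans (linform_le_prod_lpnorm p_gt0 xp_gt0) _.
rewrite ler_piMl ?specnorm_ge0 // prodr_ile1 // => k _.
by rewrite lpnormr_ge0 -(x_unit k) lpnorm_antitone.
Qed.

Lemma rsize_gt0 : (0 < rsize n)%N.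
Proof. exact: prodn_gt0. Qed.

Lemma specnorm_le_card (p q : R) : 0 < q -> q <= p ->
  specnorm p A <= (rsize n)%:R `^ (q^-1 - p^-1) * specnorm q A.
Proof.
move=> q_gt0 le_qp; have p_gt0 := lt_le_trans q_gt0 le_qp.
apply: specnorm_le => // x x_unit.
have xq_ge1 k : 1 <= lpnorm q (x k) by rewrite -(x_unit k) lpnorm_antitone.
have xq_gt0 k : 0 < lpnorm q (x k) := lt_le_trans ltr01 (xq_ge1 k).
apply: le_trans (linform_le_prod_lpnorm q_gt0 xq_gt0) _.
rewrite ler_wpM2r ?specnorm_ge0 // /rsize natr_prod powR_prod // ler_prod // => k _.
rewrite lpnormr_ge0 /=; apply: le_trans (lpnorm_le_card (x k) q_gt0 le_qp) _.
by rewrite x_unit mulr1.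
Qed.

Lemma scaled_specnorm_antitone (p q : R) : 0 < q -> q <= p ->
  (rsize n)%:R `^ p^-1 * specnorm p A <= (rsize n)%:R `^ q^-1 * specnorm q A.
Proof.
move=> q_gt0 le_qp; have N_gt0 : 0 < (rsize n)%:R :> R by rewrite ltr0n rsize_gt0.
apply: le_trans (ler_wpM2l (powR_ge0 _ _) (specnorm_le_card q_gt0 le_qp)) _.
by rewrite mulrA -powRD ?(gt_eqF N_gt0) ?implybT // addrC subrK.
Qed.

Lemma specnorm_sub_le (p q : R) : 1 <= q -> q <= p ->
  specnorm p A - specnorm q A <=
    (p - q) * sumabs A * (rsize n)%:R * ln (rsize n)%:R.
Proof.
move=> q_ge1 le_qp; have q_gt0 := lt_le_trans ltr01 q_ge1.
have p_gt0 := lt_le_trans q_gt0 le_qp.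
set N : R := (rsize n)%:R; set t := q^-1 - p^-1.
have N_ge1 : 1 <= N by rewrite ler1n rsize_gt0.
have t01 : 0 <= t <= 1.
  apply/andP; split; first by rewrite subr_ge0 lef_pV2 ?posrE.
  apply: (@le_trans _ _ q^-1); last by rewrite invf_le1.
  by rewrite /t gerBl invr_ge0 ltW.
have t_le_pq : t <= p - q.
  have -> : t = (p - q) / (p * q) by rewrite /t; field; rewrite !gt_eqF.
  rewrite ler_pdivrMr ?mulr_gt0 // ler_peMr ?subr_ge0 //.
  by rewrite -[1]mulr1 ler_pM ?(le_trans q_ge1).
have Nt_ge1 : 1 <= N `^ t by rewrite -(powRr0 N) ler_powR //; case/andP: t01.
apply: (@le_trans _ _ ((N `^ t - 1) * sumabs A)).
  apply: (@le_trans _ _ ((N `^ t - 1) * specnorm q A)).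
    by rewrite mulrBl mul1r lerD2r specnorm_le_card.
  by rewrite ler_wpM2l ?subr_ge0 ?specnorm_le_sumabs.
have -> : (p - q) * sumabs A * N * ln N = (p - q) * N * ln N * sumabs A.
  by ring.
apply: ler_wpM2r; first by apply: sumr_ge0 => i _; exact: cabs_ge0.
apply: le_trans (powR_sub1_le N_ge1 t01) _.
have NlnN_ge0 : 0 <= N * ln N by rewrite mulr_ge0 ?ln_ge0 // (le_trans ler01).
by rewrite -!mulrA ler_wpM2r.
Qed.

End SpectralNorm.

Theorem proposition4 (R : realType) (r : nat) (n : 'I_r -> nat)
    (n_pos : forall k, (0 < n k)%N) (A : rmatrix R n) :
  let N : R := (rsize n)%:R in
  [/\ specnorm 1 A = maxabs A,
      (forall p q : R, 1 <= q -> q <= p -> specnorm q A <= specnorm p A),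
      (forall p q : R, 1 <= q -> q <= p ->
          N `^ p^-1 * specnorm p A <= N `^ q^-1 * specnorm q A),
      (forall p : R, 1 <= p -> specnorm p A <= sumabs A)
    & (forall p q : R, 1 <= q -> q <= p ->
          0 <= specnorm p A - specnorm q A /\
          specnorm p A - specnorm q A <= (p - q) * sumabs A * N * ln N)].
Proof.
have pos (q : R) : 1 <= q -> 0 < q := lt_le_trans ltr01.
move=> N; split.
- exact: specnorm1.
- by move=> p q /pos; exact: specnorm_mono.
- by move=> p q /pos; exact: scaled_specnorm_antitone.
- by move=> p /pos; exact: specnorm_le_sumabs.
- move=> p q q_ge1 le_qp; split; last exact: specnorm_sub_le.
  by rewrite subr_ge0; exact: specnorm_mono (pos q q_ge1) le_qp.
Qed.
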